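(* With $\omega$ and $(\mathbb G,E)$ as below, $\mathrm{supp}(\omega)=\mathbb G$.
   Context: $D$ finite, $m\ge2$, $\Gamma$ a finite set of cost functions $f:D^n\to\mathbb Q\cup\{\infty\}$, $\mathrm{dom} f=\{x:f(x)<\infty\}$. Maps $\mathbf g=(g_1,\dots,g_m):D^m\to D^m$ act on $x=(x^1,\dots,x^m)\in[D^n]^m$ by $\mathbf g(x)=(g_1(x),\dots,g_m(x))$ with $g_i$ applied coordinatewise; $f^m(x)=\frac1m\sum_i f(x^i)$. A generalized fractional polymorphism of $\Gamma$ of arity $m\to m$ is a finitely supported probability distribution $\rho$ on such maps with $\sum_{\mathbf g}\rho(\mathbf g)f^m(\mathbf g(x))\le f^m(x)$ for all $f\in\Gamma$, $x\in[\mathrm{dom} f]^m$. For $x\in D^m$ and permutation $\pi$, $x^\pi=(x_{\pi(1)},\dots,x_{\pi(m)})$ and $\mathbf g^\pi=(g_{\pi(1)},\dots,g_{\pi(m)})$; $\Omega$ is the set of maps $\mathbf g$ with $\mathbf g^\pi(x)=\mathbf g(x^\pi)$ for all $x,\pi$. Let $\omega$ be a generalized fractional polymorphism of $\Gamma$ of arity $m\to m$ with $\mathrm{supp}(\omega)\subseteq\Omega$ whose support contains the support of every other generalized fractional polymorphism of $\Gamma$ of arity $m\to m$ with support in $\Omega$ (such $\omega$ exists). Let $\mathbb G=\{\mathbf g_k\circ\dots\circ\mathbf g_1:k\ge0,\mathbf g_i\in\mathrm{supp}(\omega)\}$ (with $k=0$ giving the identity $\mathbb 1$) and $E=\{(\mathbf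 g,\mathbf h\circ\mathbf g):\mathbf g\in\mathbb G,\mathbf h\in\mathrm{supp}(\omega)\}$. *)

From HB Require Import structures.
From mathcomp Require Import all_boot all_order all_algebra all_fingroup.
Set Implicit Arguments. Unset Strict Implicit. Unset Printing Implicit Defensive.
Import Order.TTheory GRing.Theory Num.Theory.
Local Open Scope ring_scope.

(* Maps g = (g_1,...,g_m) : D^m -> D^m ; component g_i y = tnth (g y) i. *)
Definition map_t (D : finType) (m : nat) := {ffun m.-tuple D -> m.-tuple D}.

Definition col (D : finType) (m n : nat) (x : m.-tuple (n.-tuple D)) (j : 'I_n)
  : m.-tuple D := [tuple tnth (tnth x i) j | i < m].

Definition app (D : finType) (m n : nat) (g : map_t D m)
  (x : m.-tuple (n.-tuple D)) : m.-tuple (n.-tuple D) :=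
  [tuple [tuple tnth (g (col x j)) i | j < n] | i < m].

(* Cost functions D^n -> Q u {oo}, with None = oo. *)
Definition in_dom (D : finType) (n : nat) (f : n.-tuple D -> option rat)
  (t : n.-tuple D) : bool := f t != None.

(* finite part of f^m(x) = 1/m sum_i f(x^i) (meaningful when all x^i in dom f) *)
Definition fm (R : realFieldType) (D : finType) (m n : nat)
  (f : n.-tuple D -> option rat) (x : m.-tuple (n.-tuple D)) : R :=
  (m%:R)^-1 * \sum_(i < m) ratr (odflt 0 (f (tnth x i))).

Definition supp (R : realFieldType) (D : finType) (m : nat)
  (rho : {ffun map_t D m -> R}) : pred (map_t D m) := fun g => rho g != 0.

(* The inequality
   sum_g rho(g) f^m(g(x)) <= f^m(x) with values in Q u {oo} (RHS finite since
   x in [dom f]^m) means: every g in the support maps x into [dom f]^m, and the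
   finite inequality holds. *)
Definition gfp (R : realFieldType) (D : finType) (m : nat) (I : finType)
  (ar : I -> nat) (Gam : forall i : I, (ar i).-tuple D -> option rat)
  (rho : {ffun map_t D m -> R}) : Prop :=
  [/\ (forall g, 0 <= rho g),
      \sum_g rho g = 1 &
      forall (k : I) (x : m.-tuple ((ar k).-tuple D)),
        (forall i : 'I_m, in_dom (Gam k) (tnth x i)) ->
        (forall g, supp rho g -> forall i : 'I_m, in_dom (Gam k) (tnth (app g x) i))
        /\ \sum_g rho g * fm R (Gam k) (app g x) <= fm R (Gam k) x].

Definition perm_tuple (D : finType) (m : nat) (p : 'S_m) (y : m.-tuple D)
  : m.-tuple D := [tuple tnth y (p i) | i < m].

(* Omega: g^pi(x) = g(x^pi) for all x, pi *)
Definition inOmega (D : finType) (m : nat) (g : map_t D m) : Prop :=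
  forall (y : m.-tuple D) (p : 'S_m) (i : 'I_m),
    tnth (g y) (p i) = tnth (g (perm_tuple p y)) i.

Definition idmap_t (D : finType) (m : nat) : map_t D m := [ffun y => y].

Definition comp_t (D : finType) (m : nat) (h g : map_t D m) : map_t D m :=
  [ffun y => h (g y)].

(* GG = { g_k o ... o g_1 : k >= 0, g_i in supp omega } ; the list s = [g_1;...;g_k] *)
Definition inGG (R : realFieldType) (D : finType) (m : nat)
  (omega : {ffun map_t D m -> R}) (g : map_t D m) : Prop :=
  exists s : seq (map_t D m),
    all (supp omega) s /\ g = foldl (fun acc h => comp_t h acc) (idmap_t D m) s.

(* E = { (g, h o g) : g in GG, h in supp omega } (not needed for the statement) *)
Definition inE (R : realFieldType) (D : finType) (m : nat)
  (omega : {ffun map_t D m -> R}) (g g' : map_t D m) : Prop :=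
  inGG omega g /\ exists2 h, supp omega h & g' = comp_t h g.

From Pilot Require Import Defs.
From HB Require Import structures.
From mathcomp Require Import all_boot all_order all_algebra all_fingroup.
Import Order.TTheory GRing.Theory Num.Theory.
Local Open Scope ring_scope.
Set Implicit Arguments. Unset Strict Implicit.

(* The generalized fractional polymorphisms of arity m -> m with support in
   Omega are closed under convex combinations and under composition
   (draw g from rho, then h from sigma, and output h o g), and the Dirac mass
   at the identity is one of them.  Since supp omega contains the support of
   every such polymorphism, mixing omega with the Dirac mass shows that the
   identity lies in supp omega, and composing omega with itself shows that
   supp omega is closed under composition; hence supp omega is the monoid
   generated by supp omega, which is GG. *)

Section Operations.
Variables (D : finType) (m : nat).
Implicit Types (g h : map_t D m).

Lemma col_app n g (x : m.-tuple (n.-tuple D)) j :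
  Defs.col (app g x) j = g (Defs.col x j).
Proof. by apply: eq_from_tnth => i; rewrite /Defs.col /app !tnth_mktuple. Qed.

Lemma app_id n (x : m.-tuple (n.-tuple D)) : app (idmap_t D m) x = x.
Proof.
apply: eq_from_tnth => i; rewrite tnth_mktuple.
by apply: eq_from_tnth => j; rewrite tnth_mktuple ffunE /Defs.col tnth_mktuple.
Qed.

Lemma app_comp n h g (x : m.-tuple (n.-tuple D)) :
  app (comp_t h g) x = app h (app g x).
Proof.
apply: eq_from_tnth => i; rewrite /app !tnth_mktuple.
by apply: eq_from_tnth => j; rewrite !tnth_mktuple ffunE -col_app.
Qed.

Lemma inOmega_id : inOmega (idmap_t D m).
Proof. by move=> y p i; rewrite !ffunE /perm_tuple tnth_mktuple. Qed.

Lemma inOmega_comp h g : inOmega g -> inOmega h -> inOmega (comp_t h g).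
Proof.
move=> Og Oh y p i; rewrite !ffunE Oh; congr (tnth (h _) i).
by apply: eq_from_tnth => j; rewrite /perm_tuple !tnth_mktuple Og.
Qed.

End Operations.

Section Distributions.
Variables (R : realFieldType) (D : finType) (m : nat).
Implicit Types (g h k : map_t D m) (rho sigma : {ffun map_t D m -> R}).

Definition dirac g : {ffun map_t D m -> R} := [ffun h => (h == g)%:R].

Definition mix (t : R) rho sigma : {ffun map_t D m -> R} :=
  [ffun g => t * rho g + (1 - t) * sigma g].

(* The law of [h o g] for independent [g ~ rho] and [h ~ sigma]. *)
Definition comp_dist rho sigma : {ffun map_t D m -> R} :=
  [ffun k => \sum_(p : map_t D m * map_t D m)
               rho p.1 * sigma p.2 * (comp_t p.2 p.1 == k)%:R].

Lemma sum_dirac g (phi : map_t D m -> R) : \sum_h dirac g h * phi h = phi g.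
Proof.
rewrite (bigD1 g) //= ffunE eqxx mul1r big1 ?addr0 // => h /negbTE ngh.
by rewrite ffunE ngh mul0r.
Qed.

Lemma supp_dirac g h : supp (dirac g) h = (h == g).
Proof. by rewrite /supp ffunE pnatr_eq0 eqb0 negbK. Qed.

Lemma sum_mix t rho sigma (phi : map_t D m -> R) :
  \sum_g mix t rho sigma g * phi g
  = t * \sum_g rho g * phi g + (1 - t) * \sum_g sigma g * phi g.
Proof.
rewrite !mulr_sumr -big_split /=; apply: eq_bigr => g _.
by rewrite ffunE mulrDl !mulrA.
Qed.

Lemma supp_mix t rho sigma g :
  supp (mix t rho sigma) g -> supp rho g || supp sigma g.
Proof.
rewrite /supp ffunE; apply: contraR; rewrite negb_or !negbK.
by case/andP=> /eqP -> /eqP ->; rewrite !mulr0 addr0.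
Qed.

Lemma supp_mixr t rho sigma g :
  0 <= t < 1 -> 0 <= rho g -> 0 <= sigma g -> supp sigma g ->
  supp (mix t rho sigma) g.
Proof.
case/andP=> t_ge0 t_lt1 rho_ge0 sigma_ge0 sigma_neq0; rewrite /supp ffunE.
have sigma_gt0 : 0 < (1 - t) * sigma g.
  by rewrite mulr_gt0 ?subr_gt0 // lt_def sigma_ge0 andbT.
by rewrite gt_eqF // ltr_wpDl // mulr_ge0.
Qed.

Lemma sum_comp_dist rho sigma (phi : map_t D m -> R) :
  \sum_k comp_dist rho sigma k * phi k
  = \sum_g \sum_h rho g * sigma h * phi (comp_t h g).
Proof.
under eq_bigr do rewrite ffunE mulr_suml.
rewrite exchange_big [RHS]pair_bigA /=; apply: eq_bigr => -[g h] _ /=.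
rewrite (bigD1 (comp_t h g)) //= eqxx mulr1 big1 ?addr0 // => k /negbTE nk.
by rewrite eq_sym nk mulr0 mul0r.
Qed.

Lemma supp_comp_distP rho sigma k : supp (comp_dist rho sigma) k ->
  exists g h, [/\ supp rho g, supp sigma h & k = comp_t h g].
Proof.
pose P p := (rho p.1 * sigma p.2 != 0) && (comp_t p.2 p.1 == k).
case: (pickP P) => [[g h] /andP[] | noP].
  by rewrite mulf_eq0 negb_or => /andP[rho_g sigma_h] /eqP <-; exists g, h.
rewrite /supp ffunE big1 ?eqxx // => p _.
move: (noP p); rewrite /P; case: (comp_t p.2 p.1 == k); last by rewrite mulr0.
by rewrite andbT => /negbFE /eqP ->; rewrite !mul0r.
Qed.

Lemma supp_comp_dist rho sigma g h :
  (forall g, 0 <= rho g) -> (forall h, 0 <= sigma h) ->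
  supp rho g -> supp sigma h -> supp (comp_dist rho sigma) (comp_t h g).
Proof.
move=> rho_ge0 sigma_ge0; rewrite /supp ffunE => rho_g sigma_h.
rewrite (bigD1 (g, h)) //= eqxx mulr1.
have term_gt0 : 0 < rho g * sigma h.
  by apply: mulr_gt0; rewrite lt_def ?rho_g ?sigma_h ?rho_ge0 ?sigma_ge0.
rewrite gt_eqF // ltr_wpDr // sumr_ge0 // => p _.
by rewrite !mulr_ge0.
Qed.

End Distributions.

Section Polymorphisms.
Variables (R : realFieldType) (D : finType) (m : nat) (I : finType) (ar : I -> nat).
Variable Gam : forall i : I, (ar i).-tuple D -> option rat.
Implicit Types (rho sigma : {ffun map_t D m -> R}).

Lemma gfp_dirac_id : gfp Gam (dirac R (idmap_t D m)).
Proof.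
split=> [g | | k x x_dom]; first by rewrite ffunE ler0n.
  rewrite -[RHS](sum_dirac (idmap_t D m) (fun=> 1)).
  by apply: eq_bigr => g _; rewrite mulr1.
split; last by rewrite sum_dirac app_id.
by move=> g; rewrite supp_dirac => /eqP ->; rewrite app_id.
Qed.

Lemma gfp_mix (t : R) rho sigma : 0 <= t <= 1 ->
  gfp Gam rho -> gfp Gam sigma -> gfp Gam (mix t rho sigma).
Proof.
case/andP=> t_ge0 t_le1 [rho_ge0 rho_sum rho_ok] [sigma_ge0 sigma_sum sigma_ok].
have t'_ge0 : 0 <= 1 - t by rewrite subr_ge0.
split=> [g | | k x x_dom].
- by rewrite ffunE addr_ge0 ?mulr_ge0.
- have := sum_mix t rho sigma (fun=> 1); rewrite !(eq_bigr _ (fun g _ => mulr1 _)).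
  by move=> ->; rewrite rho_sum sigma_sum !mulr1 addrC subrK.
have [rho_dom rho_le] := rho_ok k x x_dom.
have [sigma_dom sigma_le] := sigma_ok k x x_dom.
split=> [g /supp_mix /orP[/rho_dom | /sigma_dom] // | ].
rewrite sum_mix; apply: le_trans
  (lerD (ler_wpM2l t_ge0 rho_le) (ler_wpM2l t'_ge0 sigma_le)) _.
by rewrite -mulrDl addrC subrK mul1r.
Qed.

Lemma gfp_comp_dist rho sigma :
  gfp Gam rho -> gfp Gam sigma -> gfp Gam (comp_dist rho sigma).
Proof.
case=> [rho_ge0 rho_sum rho_ok] [sigma_ge0 sigma_sum sigma_ok].
split=> [k | | k x x_dom].
- by rewrite ffunE sumr_ge0 // => p _; rewrite !mulr_ge0.
- rewrite (eq_bigr (fun k => comp_dist rho sigma k * 1)) => [|k _];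
    last by rewrite mulr1.
  rewrite sum_comp_dist -[RHS]rho_sum; apply: eq_bigr => g _.
  by under eq_bigr do rewrite mulr1; rewrite -mulr_sumr sigma_sum mulr1.
have [rho_dom rho_le] := rho_ok k x x_dom.
split=> [_ /supp_comp_distP [g [h [rho_g sigma_h ->]]] i | ].
  have [sigma_dom _] := sigma_ok k _ (rho_dom g rho_g).
  by rewrite app_comp; apply: sigma_dom.
rewrite sum_comp_dist; apply: le_trans rho_le; apply: ler_sum => g _.
under eq_bigr do rewrite -mulrA app_comp.
rewrite -mulr_sumr; have [-> | rho_g] := eqVneq (rho g) 0; first by rewrite !mul0r.
by have [_ sigma_le] := sigma_ok k _ (rho_dom g rho_g); rewrite ler_wpM2l.
Qed.

End Polymorphisms.

Section MaximalSupport.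
Variables (R : realFieldType) (D : finType) (m : nat) (I : finType) (ar : I -> nat).
Variables (Gam : forall i : I, (ar i).-tuple D -> option rat)
  (omega : {ffun map_t D m -> R}).
Hypothesis omega_gfp : gfp Gam omega.
Hypothesis omega_Omega : forall g, supp omega g -> inOmega g.
Hypothesis omega_max : forall rho : {ffun map_t D m -> R}, gfp Gam rho ->
  (forall g, supp rho g -> inOmega g) -> forall g, supp rho g -> supp omega g.

Let omega_ge0 : forall g, 0 <= omega g.
Proof. by case: omega_gfp. Qed.

Lemma supp_omega_id : supp omega (idmap_t D m).
Proof.
have half_ge0 : (0 : R) <= 2^-1 by rewrite invr_ge0 ler0n.
have half_lt1 : (2^-1 : R) < 1 by rewrite invf_lt1 ?ltr0n ?ltr1n.
have half_range : 0 <= (2^-1 : R) <= 1 by rewrite half_ge0 ltW.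
apply: (omega_max (gfp_mix half_range omega_gfp (gfp_dirac_id R m Gam))).
  move=> g /supp_mix /orP[/omega_Omega // | ].
  by rewrite supp_dirac => /eqP ->; apply: inOmega_id.
apply: supp_mixr; rewrite ?half_ge0 ?half_lt1 ?omega_ge0 //.
  by rewrite ffunE ler0n.
by rewrite supp_dirac.
Qed.

Lemma supp_omega_comp g h :
  supp omega g -> supp omega h -> supp omega (comp_t h g).
Proof.
move=> omega_g omega_h.
apply: (omega_max (gfp_comp_dist omega_gfp omega_gfp)).
  move=> _ /supp_comp_distP [g' [h' [omega_g' omega_h' ->]]].
  by apply: inOmega_comp; apply: omega_Omega.
exact: supp_comp_dist.
Qed.

Lemma supp_omega_GG g : supp omega g <-> inGG omega g.
Proof.
split=> [omega_g | [s [s_supp ->]]].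
  by exists [:: g]; split; [rewrite /= omega_g | apply/ffunP => y; rewrite !ffunE].
elim: s (idmap_t D m) supp_omega_id s_supp => [| h s IHs] acc omega_acc //=.
by case/andP=> omega_h s_supp; apply: IHs => //; apply: supp_omega_comp.
Qed.

End MaximalSupport.

Theorem proposition6p2 (R : realFieldType) (D : finType) (m : nat)
  (I : finType) (ar : I -> nat) (Gam : forall i : I, (ar i).-tuple D -> option rat)
  (omega : {ffun map_t D m -> R}) :
  (2 <= m)%N ->
  gfp Gam omega ->
  (forall g, supp omega g -> inOmega g) ->
  (forall rho : {ffun map_t D m -> R}, gfp Gam rho ->
     (forall g, supp rho g -> inOmega g) ->
     forall g, supp rho g -> supp omega g) ->
  forall g : map_t D m, supp omega g <-> inGG omega g.
Proof. by move=> _; exact: supp_omega_GG. Qed.
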